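(* For each $n$, let $A^{(n)}$ be a clustering of $\{1,\dots,n\}$, let $s^{(n)}$ be a cluster-size specification of $n$ elements, let $B^{(n)}\sim\mathcal C(s^{(n)})$, and let $N_{11}^{(n)}$ be the number of unordered pairs of distinct elements lying in a common cluster of both $A^{(n)}$ and $B^{(n)}$. Then $\operatorname{Var}(N_{11}^{(n)})=o(n^4)$ as $n\to\infty$; consequently $N_{11}^{(n)}/N-m_Am_B/N^2\to0$ in probability, where $N=\binom n2$ and $m_A,m_B$ are the numbers of intra-cluster pairs of $A^{(n)}$ and $B^{(n)}$.
   Context: A clustering is a partition into nonempty clusters; an intra-cluster pair is a pair of distinct elements in the same cluster. For a multiset $s$ of positive integers summing to $n$, $\mathcal C(s)$ is the uniform distribution over clusterings of $\{1,\dots,n\}$ whose multiset of cluster sizes is $s$. *)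

From HB Require Import structures.
From mathcomp Require Import all_boot all_order all_algebra.
Set Implicit Arguments. Unset Strict Implicit. Unset Printing Implicit Defensive.
Import Order.TTheory GRing.Theory Num.Theory.

(* A clustering of {1..n} (modelled as 'I_n) is a partition of the whole
   set into nonempty blocks (finset's [partition], which excludes set0). *)
Definition clustering (n : nat) (P : {set {set 'I_n}}) : bool :=
  partition P [set: 'I_n].

(* multiset of cluster sizes, as a sequence (compared up to permutation) *)
Definition cluster_sizes (n : nat) (P : {set {set 'I_n}}) : seq nat :=
  map (fun C : {set 'I_n} => #|C|) (enum P).

Definition size_spec (n : nat) (s : seq nat) : bool :=
  all (fun k => 0 < k) s && (sumn s == n).

(* support of the uniform distribution C(s) *)
Definition Cs (n : nat) (s : seq nat) : {set {set {set 'I_n}}} :=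
  [set P | clustering P & perm_eq (cluster_sizes P) s].

Definition same_cluster (n : nat) (P : {set {set 'I_n}}) (x y : 'I_n) : bool :=
  [exists C in P, (x \in C) && (y \in C)].

Definition intra_pairs (n : nat) (P : {set {set 'I_n}}) : nat :=
  #|[set p : 'I_n * 'I_n | (p.1 < p.2)%N & same_cluster P p.1 p.2]|.

Definition N11 (n : nat) (A B : {set {set 'I_n}}) : nat :=
  #|[set p : 'I_n * 'I_n |
      [&& (p.1 < p.2)%N, same_cluster A p.1 p.2 & same_cluster B p.1 p.2]]|.

Local Open Scope ring_scope.

Definition expect (n : nat) (s : seq nat) (f : {set {set 'I_n}} -> rat) : rat :=
  (\sum_(B in Cs n s) f B) / #|Cs n s|%:R.

Definition prob (n : nat) (s : seq nat) (E : pred {set {set 'I_n}}) : rat :=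
  #|[set B in Cs n s | E B]|%:R / #|Cs n s|%:R.

Definition varN11 (n : nat) (A : {set {set 'I_n}}) (s : seq nat) : rat :=
  expect s (fun B => ((N11 A B)%:R - expect s (fun B' => (N11 A B')%:R)) ^+ 2).

Definition stat (n : nat) (A B : {set {set 'I_n}}) : rat :=
  let N : rat := ('C(n, 2))%:R in
  (N11 A B)%:R / N - (intra_pairs A)%:R * (intra_pairs B)%:R / N ^+ 2.

From HB Require Import structures.
From mathcomp Require Import all_boot all_order all_algebra.
From mathcomp Require Import perm action primitive_action alt.
From mathcomp Require Import zify ring.
Set Implicit Arguments. Unset Strict Implicit. Unset Printing Implicit Defensive.
Import Order.TTheory GRing.Theory Num.Theory.

(* Relabelling {1..n} by a permutation preserves C(s) and acts transitively on
   ordered pairs and on ordered 4-tuples of distinct points, so the number of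
   B in C(s) in which a pair is co-clustered does not depend on the pair, and
   the same holds for two disjoint pairs.  As every B in C(s) has the same
   number a of ordered intra-cluster pairs, this makes E[N11] = m_A a / n(n-1)
   exact and bounds the co-clustering probability of two disjoint pairs by
   a^2 / n(n-1)(n-2)(n-3).  Expanding E[N11^2] over pairs of intra-cluster
   pairs of A, the disjoint ones contribute E[N11]^2 up to O(n^3), and there
   are only O(n^3) overlapping ones, so Var N11 <= 12 n^3 for n >= 8.
   Chebyshev's inequality with N ~ n^2/2 gives the second claim. *)

Lemma perm_map_enum_imset (I J : finType) (h : I -> J) (F : J -> nat) (P : {set I}) :
  injective h -> perm_eq (map F (enum (h @: P))) (map (F \o h) (enum P)).
Proof.
move=> h_inj; rewrite map_comp; apply: perm_map.
apply: uniq_perm; rewrite ?map_inj_uniq ?enum_uniq // => y.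
rewrite mem_enum; apply/imsetP/mapP => -[x xP ->]; exists x => //.
  by rewrite mem_enum.
by rewrite -mem_enum.
Qed.

Section Relabel.
Variable n : nat.
Implicit Types (g : {perm 'I_n}) (P : {set {set 'I_n}}).

Definition relabel g P : {set {set 'I_n}} :=
  [set (fun x => g x) @: (C : {set 'I_n}) | C in P].

Lemma relabelK g : cancel (relabel g) (relabel g^-1).
Proof.
move=> P; rewrite /relabel -imset_comp -[RHS]imset_id; apply: eq_imset => C /=.
by rewrite -imset_comp -[RHS]imset_id; apply: eq_imset => x /=; rewrite permK.
Qed.

Lemma relabel_inj g : injective (relabel g).
Proof. exact: can_inj (relabelK g). Qed.

Lemma same_cluster_relabel g P x y :
  same_cluster (relabel g P) (g x) (g y) = same_cluster P x y.
Proof.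
have gE := mem_imset _ _ (@perm_inj _ g).
apply/existsP/existsP => [[_ /and3P[/imsetP[C CP ->]]]|[C /and3P[CP xC yC]]].
  by rewrite !gE => xC yC; exists C; rewrite CP xC yC.
by exists ((fun x => g x) @: C); rewrite imset_f //= !gE xC yC.
Qed.

Lemma relabel_Cs g s P : P \in Cs n s -> relabel g P \in Cs n s.
Proof.
rewrite !inE => /andP[cP sP]; apply/andP; split.
  rewrite /clustering; have -> : [set: 'I_n] = [set g x | x in [set: 'I_n]].
    apply/setP => x; rewrite inE; apply/esym/imsetP.
    by exists ((g^-1)%g x); rewrite ?inE ?permKV.
  by rewrite imset_partition //; exact: perm_inj.
apply: perm_trans sP; rewrite /cluster_sizes /relabel.
apply: perm_trans (perm_map_enum_imset _ _ (imset_inj (@perm_inj _ g))) _.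
rewrite (eq_map (g := fun C : {set 'I_n} => #|C|)) // => C /=.
by rewrite card_imset //; exact: perm_inj.
Qed.

Lemma sum_relabel_Cs (F : {set {set 'I_n}} -> nat) g s :
  \sum_(B in Cs n s) F (relabel g B) = \sum_(B in Cs n s) F B.
Proof.
rewrite -(big_imset F (in2W (@relabel_inj g))).
suff -> : relabel g @: Cs n s = Cs n s by [].
apply/eqP; rewrite eqEcard card_imset ?leqnn ?andbT; last exact: relabel_inj.
by apply/subsetP => _ /imsetP[B BS ->]; apply: relabel_Cs.
Qed.

Lemma exists_perm_tuple k (t t' : k.-tuple 'I_n) : uniq t -> uniq t' ->
  exists g : {perm 'I_n}, forall i, g (tnth t i) = tnth t' i.
Proof.
move=> ut ut'.
have kn : k <= #|'I_n| by rewrite -(card_uniq_tuple ut) max_card.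
have tD (u : k.-tuple 'I_n) : uniq u -> u \in k.-dtuple(setT).
  by move=> uu; rewrite inE uu; apply/subsetP => x; rewrite inE.
have [g _ ->] := atransP2 (ntransitive_weak kn (Sym_trans 'I_n)) (tD _ ut) (tD _ ut').
by exists g => i; rewrite tnth_map.
Qed.

End Relabel.

Section BigSums.
Variable T : finType.

Lemma exchange_big2 (I : finType) (P : pred I) (F : I -> T -> T -> nat) :
  \sum_(i | P i) \sum_(x : T) \sum_(y : T) F i x y =
  \sum_(x : T) \sum_(y : T) \sum_(i | P i) F i x y.
Proof. by rewrite exchange_big; apply: eq_bigr => x _; exact: exchange_big. Qed.

Lemma exchange_big4 (I : finType) (P : pred I) (F : I -> T -> T -> T -> T -> nat) :
  \sum_(i | P i) \sum_(x : T) \sum_(y : T) \sum_(z : T) \sum_(w : T) F i x y z w =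
  \sum_(x : T) \sum_(y : T) \sum_(z : T) \sum_(w : T) \sum_(i | P i) F i x y z w.
Proof.
by rewrite exchange_big2; apply: eq_bigr => x _; apply: eq_bigr => y _; exact: exchange_big2.
Qed.

Lemma mul_sum2 (f g : T -> T -> nat) :
  (\sum_(x : T) \sum_(y : T) f x y) * (\sum_(z : T) \sum_(w : T) g z w) =
  \sum_(x : T) \sum_(y : T) \sum_(z : T) \sum_(w : T) f x y * g z w.
Proof.
rewrite big_distrl; apply: eq_bigr => x _; rewrite big_distrl; apply: eq_bigr => y _.
by rewrite big_distrr; apply: eq_bigr => z _; rewrite big_distrr.
Qed.

Lemma card_set_pair (P : T -> T -> bool) :
  #|[set p : T * T | P p.1 p.2]| = \sum_(x : T) \sum_(y : T) (P x y : nat).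
Proof.
rewrite cardsE -sum1_card big_mkcond /= pair_big /=.
by apply: eq_bigr => i _; rewrite unfold_in; case: (P _ _).
Qed.

Lemma sum_uniq_cons (l : seq T) : uniq l ->
  \sum_(w : T) (uniq (w :: l) : nat) = #|T| - size l.
Proof.
move=> ul; rewrite -(card_uniqP ul) -(cardC (mem l)) addKn -sum1_card [RHS]big_mkcond /=.
by apply: eq_bigr => w _; rewrite /= ul andbT !inE; case: (w \in l).
Qed.

End BigSums.

Section DistinctTuples.
Variable n : nat.
Notation T := 'I_n.

Lemma sum_neq (x : T) : \sum_(y : T) (x != y : nat) = n.-1.
Proof.
rewrite -[in RHS](card_ord n) -(cardC1 x) -sum1_card [RHS]big_mkcond /=.
by apply: eq_bigr => y _; rewrite !inE eq_sym; case: (y == x).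
Qed.

Lemma sum_neq2 : \sum_(x : T) \sum_(y : T) (x != y : nat) = n * n.-1.
Proof. by under eq_bigr => x _ do rewrite sum_neq; rewrite sum_nat_const card_ord. Qed.

Lemma sum_uniq4 : \sum_(x : T) \sum_(y : T) \sum_(z : T) \sum_(w : T)
   (uniq [:: w; z; y; x] : nat) = n * (n.-1 * ((n - 2) * (n - 3))).
Proof.
have peel k (l : seq T) : size l = k -> \sum_(w : T) (uniq (w :: l) : nat) = uniq l * (n - k).
  move=> <-; case: (boolP (uniq l)) => ul; first by rewrite sum_uniq_cons ?card_ord ?mul1n.
  by rewrite mul0n big1 // => w _; rewrite cons_uniq (negbTE ul) andbF.
under eq_bigr => x _ do under eq_bigr => y _ do under eq_bigr => z _ do rewrite (peel 3) //.
under eq_bigr => x _ do under eq_bigr => y _ do rewrite -big_distrl (peel 2) //.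
under eq_bigr => x _ do rewrite -big_distrl -big_distrl (peel 1) //.
by rewrite -!big_distrl /= sum1_card card_ord subn1 !mulnA.
Qed.

Lemma uniq4_neq (x y z w : T) : uniq [:: w; z; y; x] -> (x != y) && (z != w).
Proof.
rewrite /= !inE !negb_or.
by case: (x =P y) => [->|_]; case: (z =P w) => [->|_]; rewrite ?eqxx ?andbF.
Qed.

Definition overlapping (x y z w : T) : bool :=
  [&& x != y, z != w & ~~ uniq [:: w; z; y; x]].

Lemma overlapping_count :
  \sum_(x : T) \sum_(y : T) \sum_(z : T) \sum_(w : T) (overlapping x y z w : nat)
  + n * (n.-1 * ((n - 2) * (n - 3))) = n * n.-1 * (n * n.-1).
Proof.
rewrite -sum_uniq4 -sum_neq2 mul_sum2 -big_split; apply: eq_bigr => x _.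
rewrite -big_split; apply: eq_bigr => y _; rewrite -big_split; apply: eq_bigr => z _.
rewrite -big_split; apply: eq_bigr => w _; rewrite /overlapping.
case u: (uniq _); first by have /andP[-> ->] := uniq4_neq u; rewrite andbF.
by case: (x != y); case: (z != w).
Qed.

End DistinctTuples.

Section CoClustering.
Variable n : nat.
Notation T := 'I_n.
Implicit Types (B : {set {set T}}) (x y : T).

Definition co B x y : nat := same_cluster B x y.

Lemma co_sym B x y : co B x y = co B y x.
Proof.
rewrite /co /same_cluster; congr nat_of_bool.
by apply/existsP/existsP => -[C /and3P[CB xC yC]]; exists C; rewrite CB xC yC.
Qed.

Lemma co_le1 B x y : co B x y <= 1.
Proof. by rewrite /co; case: (same_cluster B x y). Qed.

Lemma same_cluster_pblock B x y :
  clustering B -> same_cluster B x y = (y \in pblock B x).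
Proof.
move=> cB; have xB : x \in cover B by rewrite (cover_partition cB) inE.
apply/existsP/idP => [[C /and3P[CB xC yC]]|yBx].
  by rewrite (def_pblock (partition_trivIset cB) CB xC).
by exists (pblock B x); rewrite pblock_mem // mem_pblock xB yBx.
Qed.

Definition ordered_intra B := \sum_(x : T) \sum_(y : T) (x != y) * co B x y.

Lemma ordered_intra_partition B :
  clustering B -> ordered_intra B = \sum_(C in B) #|C| * #|C|.-1.
Proof.
move=> cB; rewrite /ordered_intra.
transitivity (\sum_(x : T) #|pblock B x|.-1).
  apply: eq_bigr => x _.
  have xBx : x \in pblock B x by rewrite mem_pblock (cover_partition cB) inE.
  rewrite (cardsD1 x (pblock B x)) xBx add1n /= -sum1_card [RHS]big_mkcond /=.
  apply: eq_bigr => y _; rewrite /co same_cluster_pblock // !inE eq_sym.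
  by case: (y == x); case: (y \in _).
rewrite (eq_bigl [in [set: T]]) => [|x]; last by rewrite inE.
rewrite (set_partition_big _ cB); apply: eq_bigr => C CB.
rewrite -sum_nat_const; apply: eq_bigr => x xC.
by rewrite (def_pblock (partition_trivIset cB) CB xC).
Qed.

Lemma ordered_intra_Cs s B : B \in Cs n s -> ordered_intra B = \sum_(k <- s) k * k.-1.
Proof.
rewrite inE => /andP[cB sB]; rewrite ordered_intra_partition // -big_enum /=.
by rewrite -(big_map (fun C : {set T} => #|C|) predT (fun k => k * k.-1)); exact: perm_big.
Qed.

Lemma ordered_intra_le B : ordered_intra B <= n * n.-1.
Proof.
rewrite -sum_neq2; apply: leq_sum => x _; apply: leq_sum => y _.
by rewrite -[X in _ <= X]muln1 leq_mul2l co_le1 orbT.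
Qed.

Definition lt_co B x y : nat := (x < y) && same_cluster B x y.

Lemma lt_co_le_neq B x y : lt_co B x y <= (x != y).
Proof.
rewrite /lt_co -[x != y]/(val x != val y) neq_ltn.
by case: (x < y) => /=; case: (same_cluster B x y).
Qed.

Lemma intra_pairs_sum B : intra_pairs B = \sum_(x : T) \sum_(y : T) lt_co B x y.
Proof. exact: (card_set_pair (fun x y => (x < y) && same_cluster B x y)). Qed.

Lemma intra_pairs_le B : intra_pairs B <= n * n.-1.
Proof.
rewrite intra_pairs_sum -sum_neq2; apply: leq_sum => x _; apply: leq_sum => y _.
exact: lt_co_le_neq.
Qed.

Lemma ordered_intra_double B : ordered_intra B = 2 * intra_pairs B.
Proof.
rewrite intra_pairs_sum /ordered_intra.
have -> : \sum_(x : T) \sum_(y : T) (x != y) * co B x y =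
    \sum_(x : T) \sum_(y : T) (x < y) * co B x y + \sum_(x : T) \sum_(y : T) (y < x) * co B x y.
  rewrite -big_split; apply: eq_bigr => x _; rewrite -big_split; apply: eq_bigr => y _.
  rewrite -[x != y]/(val x != val y) neq_ltn.
  by case: ltngtP => _; rewrite /= ?mul0n ?mul1n ?addn0.
rewrite [X in _ + X]exchange_big /=.
under [X in _ + X]eq_bigr => y _ do under eq_bigr => x _ do rewrite co_sym.
by rewrite mul2n -addnn; congr (_ + _); apply: eq_bigr => x _; apply: eq_bigr => y _;
  rewrite /lt_co /co; case: (x < y); rewrite ?mul1n ?mul0n.
Qed.

Lemma N11_sum A B : N11 A B = \sum_(x : T) \sum_(y : T) lt_co A x y * co B x y.
Proof.
rewrite /N11 (card_set_pair (fun x y => [&& x < y, same_cluster A x y & same_cluster B x y])).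
apply: eq_bigr => x _; apply: eq_bigr => y _; rewrite /lt_co /co.
by case: (x < y); case: (same_cluster A x y); case: (same_cluster B x y).
Qed.

End CoClustering.

Section Masses.
Variables (n : nat) (s : seq nat).
Notation T := 'I_n.

Definition pair_mass (x y : T) := \sum_(B in Cs n s) co B x y.
Definition quad_mass (x y z w : T) := \sum_(B in Cs n s) co B x y * co B z w.

Lemma pair_mass_const x y x' y' : x != y -> x' != y' -> pair_mass x y = pair_mass x' y'.
Proof.
move=> xy xy'.
have uniq2 (u v : T) : u != v -> uniq [tuple u; v] by rewrite /= inE andbT.
have [g gE] := exists_perm_tuple (uniq2 _ _ xy) (uniq2 _ _ xy').
have := gE ord0; have := gE (@Ordinal 2 1 isT); rewrite /tnth /= => <- <-.
rewrite /pair_mass -(sum_relabel_Cs (fun B => co B (g x) (g y)) g).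
by apply: eq_bigr => B _; rewrite /co same_cluster_relabel.
Qed.

Lemma quad_mass_const x y z w x' y' z' w' :
  uniq [:: w; z; y; x] -> uniq [:: w'; z'; y'; x'] ->
  quad_mass x y z w = quad_mass x' y' z' w'.
Proof.
move=> u u'.
have [g gE] := exists_perm_tuple (t := [tuple w; z; y; x]) (t' := [tuple w'; z'; y'; x']) u u'.
have := gE ord0; have := gE (@Ordinal 4 1 isT); have := gE (@Ordinal 4 2 isT);
have := gE (@Ordinal 4 3 isT); rewrite /tnth /= => <- <- <- <-.
rewrite /quad_mass -(sum_relabel_Cs (fun B => co B (g x) (g y) * co B (g z) (g w)) g).
by apply: eq_bigr => B _; rewrite /co !same_cluster_relabel.
Qed.

Lemma quad_mass_le_card x y z w : quad_mass x y z w <= #|Cs n s|.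
Proof.
rewrite /quad_mass -sum1_card; apply: leq_sum => B _.
by rewrite -[1]muln1 leq_mul ?co_le1.
Qed.

End Masses.

Section Moments.
Variables (n : nat) (s : seq nat) (A : {set {set 'I_n}}).
Notation T := 'I_n.
Notation K := #|Cs n s|.
Variables (a0 : nat) (ordered_intra_Cs0 : forall B, B \in Cs n s -> ordered_intra B = a0).
Variables (x0 y0 : T) (x0y0 : x0 != y0).
Variables (x1 y1 z1 w1 : T) (u1 : uniq [:: w1; z1; y1; x1]).

Lemma pair_mass_total : K * a0 = pair_mass s x0 y0 * (n * n.-1).
Proof.
transitivity (\sum_(B in Cs n s) ordered_intra B).
  by rewrite -sum_nat_const; apply: eq_bigr => B BS; rewrite ordered_intra_Cs0.
rewrite /ordered_intra exchange_big2 -sum_neq2 big_distrr /=; apply: eq_bigr => x _.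
rewrite big_distrr /=; apply: eq_bigr => y _.
rewrite -big_distrr /= -/(pair_mass s x y) mulnC.
by case: (boolP (x != y)) => xy; rewrite ?mul0n ?muln0 // (pair_mass_const s xy x0y0).
Qed.

Lemma quad_mass_le :
  quad_mass s x1 y1 z1 w1 * (n * (n.-1 * ((n - 2) * (n - 3)))) <= K * (a0 * a0).
Proof.
rewrite -sum_uniq4 big_distrr.
have -> : K * (a0 * a0) = \sum_(B in Cs n s)
    \sum_(x : T) \sum_(y : T) \sum_(z : T) \sum_(w : T) (x != y) * co B x y * ((z != w) * co B z w).
  by rewrite -sum_nat_const; apply: eq_bigr => B BS; rewrite -(ordered_intra_Cs0 BS) mul_sum2.
rewrite exchange_big4; apply: leq_sum => x _; rewrite big_distrr; apply: leq_sum => y _.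
rewrite big_distrr; apply: leq_sum => z _; rewrite big_distrr; apply: leq_sum => w _.
case: (boolP (uniq [:: w; z; y; x])) => u /=; last by rewrite muln0.
rewrite muln1 (quad_mass_const s u1 u) /quad_mass; apply: leq_sum => B _.
by have /andP[-> ->] := uniq4_neq u; rewrite !mul1n.
Qed.

Lemma sum_N11 : \sum_(B in Cs n s) N11 A B = intra_pairs A * pair_mass s x0 y0.
Proof.
under eq_bigr => B _ do rewrite N11_sum.
rewrite exchange_big2 intra_pairs_sum big_distrl; apply: eq_bigr => x _.
rewrite big_distrl; apply: eq_bigr => y _; rewrite -big_distrr /= -/(pair_mass s x y).
have := lt_co_le_neq A x y; rewrite /lt_co; case: (_ && _) => [|_]; last by rewrite !mul0n.
by case: (boolP (x != y)) => // xy _; rewrite (pair_mass_const s xy x0y0).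
Qed.

(* Disjoint pairs of pairs are weighted by the common [quad_mass]; overlapping
   ones are crudely bounded by [K]. *)
Lemma sum_N11_sq_le : \sum_(B in Cs n s) N11 A B * N11 A B <=
   intra_pairs A * intra_pairs A * quad_mass s x1 y1 z1 w1
   + K * \sum_(x : T) \sum_(y : T) \sum_(z : T) \sum_(w : T) (overlapping x y z w : nat).
Proof.
under eq_bigr => B _ do rewrite N11_sum mul_sum2.
rewrite exchange_big4 intra_pairs_sum mul_sum2 big_distrl big_distrr -big_split.
apply: leq_sum => x _; rewrite big_distrl big_distrr -big_split /=; apply: leq_sum => y _.
rewrite big_distrl big_distrr -big_split /=; apply: leq_sum => z _.
rewrite big_distrl big_distrr -big_split /=; apply: leq_sum => w _.
have -> : \sum_(B in Cs n s) lt_co A x y * co B x y * (lt_co A z w * co B z w) =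
    lt_co A x y * lt_co A z w * quad_mass s x y z w.
  rewrite /quad_mass big_distrr; apply: eq_bigr => B _.
  by rewrite /= mulnACA.
have := lt_co_le_neq A x y; rewrite /lt_co; case: (_ && _) => [|_]; last by rewrite !mul0n.
have := lt_co_le_neq A z w; rewrite /lt_co; case: (_ && _) => [|_]; last by rewrite !muln0.
case: (boolP (x != y)) => // xy; case: (boolP (z != w)) => // zw _ _; rewrite !mul1n.
case: (boolP (uniq [:: w; z; y; x])) => u; first by rewrite (quad_mass_const s u u1) leq_addr.
by rewrite /overlapping xy zw u muln1 (leq_trans (quad_mass_le_card _ _ _ _ _)) ?leq_addl.
Qed.

End Moments.

Lemma overlap_bounds n O : 8 <= n ->
  O + n * (n.-1 * ((n - 2) * (n - 3))) = n * n.-1 * (n * n.-1) ->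
  O <= 4 * (n * n * n) /\ n * n.-1 * (n * n.-1) <= 2 * (n * (n.-1 * ((n - 2) * (n - 3)))).
Proof.
move=> n8; have [m ->] : exists m, n = m + 8 by exists (n - 8); lia.
have -> : (m + 8).-1 = m + 7 by lia.
have -> : m + 8 - 2 = m + 6 by lia.
have -> : m + 8 - 3 = m + 5 by lia.
have square : (m + 8) * (m + 7) * ((m + 8) * (m + 7)) =
   (m + 8) * ((m + 7) * ((m + 6) * (m + 5))) + (m + 8) * ((m + 7) * (4 * m + 26)) by ring.
rewrite square addnC => /addnI ->; split; first by nia.
by rewrite mul2n -addnn leq_add2l; nia.
Qed.

Lemma sqr_le_binom2 n : 2 <= n -> n * n <= 4 * 'C(n, 2).
Proof.
move=> n2; have double : 2 * 'C(n, 2) = n * n.-1 by rewrite -[in RHS](bin1 n.-1) mul_bin_diag.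
have -> : 4 * 'C(n, 2) = n * (2 * n.-1) by rewrite mulnCA -double; ring.
by rewrite leq_mul2l; apply/orP; right; lia.
Qed.

(* The variance bound, cleared of all denominators: [SX2] is the second moment
   times [K], [c4 / K <= a0^2 / q] the correlation of two disjoint pairs, and
   [O = d^2 - q] the number of overlapping pairs of pairs. *)
Lemma variance_arith (SX2 K q d O mA a0 c4 : nat) :
  SX2 <= mA * mA * c4 + K * O -> c4 * q <= K * (a0 * a0) ->
  O + q = d * d -> mA * a0 <= d * d -> d * d <= 2 * q ->
  SX2 * K * q * (d * d) <= 3 * O * q * (K * K) * (d * d) + mA * mA * (K * K) * (a0 * a0) * q.
Proof.
move=> hSX2 hc4 hOq hmA hdq.
apply: (@leq_trans ((mA * mA * c4 + K * O) * K * q * (d * d))).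
  by rewrite !leq_mul2r hSX2 !orbT.
have -> : (mA * mA * c4 + K * O) * K * q * (d * d) =
  mA * mA * (c4 * q) * K * (d * d) + K * K * O * q * (d * d) by ring.
apply: (@leq_trans (mA * mA * (K * (a0 * a0)) * K * (d * d) + K * K * O * q * (d * d))).
  by rewrite leq_add2r !leq_mul2r leq_mul2l hc4 !orbT.
have -> : mA * mA * (K * (a0 * a0)) * K * (d * d) =
    K * K * (mA * a0 * (mA * a0)) * q + K * K * (mA * a0 * (mA * a0)) * O by rewrite -hOq; ring.
have hm2 : mA * a0 * (mA * a0) <= 2 * q * (d * d).
  by apply: leq_trans (leq_mul hmA hmA) _; exact: leq_mul.
have -> : 3 * O * q * (K * K) * (d * d) + mA * mA * (K * K) * (a0 * a0) * q =
    K * K * (mA * a0 * (mA * a0)) * q + K * K * (2 * q * (d * d)) * O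
    + K * K * O * q * (d * d) by ring.
by rewrite leq_add2r leq_add2l leq_mul2r leq_mul2l hm2 !orbT.
Qed.

Local Open Scope ring_scope.

Lemma sum_sqr_centered (I : finType) (P : {set I}) (f : I -> rat) : (0 < #|P|)%N ->
  \sum_(i in P) (f i - (\sum_(j in P) f j) / #|P|%:R) ^+ 2 =
  \sum_(i in P) f i ^+ 2 - (\sum_(j in P) f j) ^+ 2 / #|P|%:R.
Proof.
move=> P0; set S := \sum_(j in P) f j; set K := #|P|%:R.
have K0 : K != 0 by rewrite pnatr_eq0 -lt0n.
rewrite (eq_bigr (fun i => f i ^+ 2 - 2 * (S / K) * f i + (S / K) ^+ 2)) => [|i _]; last by ring.
rewrite big_split sumrB -mulr_sumr sumr_const -/S /= -[_ *+ #|P|]mulr_natl -/K.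
by field; exact: K0.
Qed.

Lemma card_le_sum (I : finType) (P : {set I}) (E : pred I) (g : I -> rat) (c : rat) :
  (forall i, i \in P -> E i -> c < g i) -> (forall i, i \in P -> 0 <= g i) ->
  #|[set i in P | E i]|%:R * c <= \sum_(i in P) g i.
Proof.
move=> hE hg; rewrite mulr_natl -sumr_const big_mkcond [X in _ <= X]big_mkcond /=.
apply: ler_sum => i _; rewrite inE; case: (boolP (i \in P)) => //= iP.
by case: (boolP (E i)) => Ei /=; [exact: ltW (hE i iP Ei) | exact: hg].
Qed.

Section Centering.
Variables (n : nat) (s : seq nat) (A B0 : {set {set 'I_n}}).
Hypothesis B0_Cs : B0 \in Cs n s.
Variables (x0 y0 : 'I_n) (x0y0 : x0 != y0).
Local Notation K := #|Cs n s|.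
Local Notation a0 := (ordered_intra B0).
Local Notation d := (n * n.-1)%N.

Let ordered_intra_Cs0 B : B \in Cs n s -> ordered_intra B = a0.
Proof. by move=> BS; rewrite (ordered_intra_Cs BS) (ordered_intra_Cs B0_Cs). Qed.

Let K_neq0 : K%:R != 0 :> rat.
Proof. by rewrite pnatr_eq0 -lt0n; apply/card_gt0P; exists B0. Qed.

Let n_gt1 : (1 < n)%N.
Proof. by move: x0y0 (ltn_ord x0) (ltn_ord y0); rewrite -val_eqE /=; lia. Qed.

Let n_neq0 : n%:R != 0 :> rat.
Proof. by rewrite pnatr_eq0; lia. Qed.

Let pred_n_neq0 : n.-1%:R != 0 :> rat.
Proof. by rewrite pnatr_eq0; lia. Qed.

Let d_neq0 : d%:R != 0 :> rat.
Proof. by rewrite natrM mulf_neq0. Qed.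

Let pair_massE : (pair_mass s x0 y0)%:R = K%:R * a0%:R / d%:R :> rat.
Proof. by rewrite -natrM (pair_mass_total ordered_intra_Cs0 x0y0) natrM mulfK. Qed.

Lemma mean_N11 : expect s (fun B => (N11 A B)%:R) = (intra_pairs A)%:R * a0%:R / d%:R.
Proof.
rewrite /expect -natr_sum (sum_N11 s A x0y0) natrM pair_massE.
by field; rewrite n_neq0 pred_n_neq0 K_neq0.
Qed.

Lemma stat_centered B : B \in Cs n s ->
  stat A B = ((N11 A B)%:R - expect s (fun B => (N11 A B)%:R)) / ('C(n, 2))%:R.
Proof.
move=> BS; have double : (2 * 'C(n, 2) = d)%N by rewrite -[in RHS](bin1 n.-1) mul_bin_diag.
have binom2 : ('C(n, 2))%:R = d%:R / 2 :> rat by rewrite -double natrM; field.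
have intra_B : (intra_pairs B)%:R = a0%:R / 2 :> rat.
  by rewrite -(ordered_intra_Cs0 BS) ordered_intra_double natrM; field.
by rewrite /stat /= intra_B binom2 mean_N11; field; rewrite n_neq0 pred_n_neq0.
Qed.

Variables (x1 y1 z1 w1 : 'I_n) (u1 : uniq [:: w1; z1; y1; x1]).
Local Notation O := (\sum_(x : 'I_n) \sum_(y : 'I_n) \sum_(z : 'I_n) \sum_(w : 'I_n)
  (overlapping x y z w : nat))%N.

Lemma varN11_le_overlap : (8 <= n)%N -> varN11 A s <= 3 * O%:R.
Proof.
move=> n8; have [_ dd_le] := overlap_bounds n8 (overlapping_count n).
set q := (n * (n.-1 * ((n - 2) * (n - 3))))%N in dd_le.
set SX2 := (\sum_(B in Cs n s) N11 A B * N11 A B)%N.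
set SX := (\sum_(B in Cs n s) N11 A B)%N.
have clear_denoms := variance_arith (sum_N11_sq_le s A u1)
  (quad_mass_le ordered_intra_Cs0 u1) (overlapping_count n)
  (leq_mul (intra_pairs_le A) (ordered_intra_le B0)) dd_le.
have q_gt0 : 0 < q%:R :> rat by rewrite ltr0n !muln_gt0; lia.
have varE : varN11 A s = (SX2%:R - SX%:R ^+ 2 / K%:R) / K%:R.
  rewrite /varN11 /expect sum_sqr_centered; last by rewrite lt0n -(pnatr_eq0 rat).
  by rewrite /SX /SX2 !natr_sum; under [in RHS]eq_bigr => B _ do rewrite natrM -expr2.
rewrite varE /SX (sum_N11 s A x0y0) natrM pair_massE.
have pos : 0 < K%:R * K%:R * q%:R * (d%:R * d%:R) :> rat.
  by rewrite !mulr_gt0 // lt_def ?K_neq0 ?d_neq0 ?ler0n.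
rewrite -(ler_pM2r pos); set lhs := (X in X <= _).
have -> : lhs = SX2%:R * K%:R * q%:R * (d%:R * d%:R)
    - (intra_pairs A)%:R * (intra_pairs A)%:R * (K%:R * K%:R) * (a0%:R * a0%:R) * q%:R.
  by rewrite /lhs; field; rewrite n_neq0 pred_n_neq0 K_neq0.
rewrite lerBlDr -!natrM -!natrD ler_nat.
by apply: leq_trans clear_denoms _; apply: eq_leq; rewrite -/q; ring.
Qed.

End Centering.

Lemma varN11_le n s (A : {set {set 'I_n}}) : (8 <= n)%N -> varN11 A s <= 12 * n%:R ^+ 3.
Proof.
move=> n8; case: (posnP #|Cs n s|) => [K0|/card_gt0P[B0 B0_Cs]].
  by rewrite /varN11 /expect K0 invr0 mulr0 mulr_ge0 ?exprn_ge0 ?ler0n.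
have lt_n k : (k < 4)%N -> (k < n)%N by lia.
pose o k (hk : (k < 4)%N) := Ordinal (lt_n k hk).
have [O_le _] := overlap_bounds n8 (overlapping_count n).
apply: le_trans (varN11_le_overlap A B0_Cs (x0 := o 0 isT) (y0 := o 1 isT) isT
  (x1 := o 0 isT) (y1 := o 1 isT) (z1 := o 2 isT) (w1 := o 3 isT) isT n8) _.
have -> : 12 * n%:R ^+ 3 = (3 * (4 * (n * n * n)))%:R :> rat by rewrite !natrM; ring.
by rewrite -natrM ler_nat leq_mul2l O_le.
Qed.

Lemma prob_stat_le n s (A : {set {set 'I_n}}) (eps : rat) : (2 <= n)%N -> 0 < eps ->
  prob s (fun B => eps < `|stat A B|) <= varN11 A s / (eps * ('C(n, 2))%:R) ^+ 2.
Proof.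
move=> n2 eps0; case: (posnP #|Cs n s|) => [K0|K_gt0].
  by rewrite /prob /varN11 /expect K0 !invr0 !mulr0 mul0r.
have /card_gt0P[B0 B0_Cs] := K_gt0.
have x0y0 : Ordinal (n2 : (1 < n)%N) != Ordinal (ltnW n2) by [].
have N_gt0 : 0 < ('C(n, 2))%:R :> rat by rewrite ltr0n bin_gt0.
pose mean := expect s (fun B => (N11 A B)%:R).
have tail : #|[set B in Cs n s | eps < `|stat A B|]|%:R * (eps * ('C(n, 2))%:R) ^+ 2 <=
    \sum_(B in Cs n s) ((N11 A B)%:R - mean) ^+ 2.
  apply: card_le_sum => [B BS|B _]; last exact: sqr_ge0.
  rewrite (stat_centered A B0_Cs x0y0 BS) -/mean normf_div (gtr0_norm N_gt0) ltr_pdivlMr //.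
  move=> lt_dev; rewrite -[X in _ < X]real_normK ?num_real // ltrXn2r //.
  by rewrite mulr_ge0 ?ltW.
have K_pos : 0 < #|Cs n s|%:R :> rat by rewrite ltr0n.
rewrite /prob /varN11 /expect -/mean mulrAC ler_pM2r ?invr_gt0 //.
by rewrite ler_pdivlMr ?exprn_gt0 ?mulr_gt0.
Qed.

Lemma eventually_ge (c : rat) :
  exists n0, forall n, (n0 <= n)%N -> (8 <= n)%N /\ c <= n%:R.
Proof.
exists (maxn 8 (Num.bound `|c|)) => n; rewrite geq_max => /andP[-> bound_n]; split=> //.
apply: le_trans (ler_norm c) _; apply/ltW/(lt_le_trans (archi_boundP (normr_ge0 c))).
by rewrite ler_nat.
Qed.

Lemma chebyshev_rate_le n (eps delta : rat) : (2 <= n)%N -> 0 < eps -> 0 < delta ->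
  192 / (eps ^+ 2 * delta) <= n%:R -> 12 * n%:R ^+ 3 / (eps * ('C(n, 2))%:R) ^+ 2 <= delta.
Proof.
move=> n2 eps0 delta0.
have c_gt0 : 0 < eps ^+ 2 * delta by rewrite mulr_gt0 ?exprn_gt0.
rewrite (ler_pdivrMr _ _ c_gt0) => n_ge.
have N_gt0 : 0 < ('C(n, 2))%:R :> rat by rewrite ltr0n bin_gt0.
have n4 : n%:R ^+ 4 <= 16 * ('C(n, 2))%:R ^+ 2 :> rat.
  have -> : n%:R ^+ 4 = n%:R * n%:R * (n%:R * n%:R) :> rat by ring.
  have -> : 16 * ('C(n, 2))%:R ^+ 2 = 4 * ('C(n, 2))%:R * (4 * ('C(n, 2))%:R) :> rat by ring.
  have := leq_mul (sqr_le_binom2 n2) (sqr_le_binom2 n2); rewrite -(ler_nat rat) !natrM.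
  by move=> le4; exact: le4.
have n3_ge0 : 0 <= n%:R ^+ 3 :> rat by rewrite exprn_ge0 ?ler0n.
have sixteen : 0 < 16 :> rat by rewrite ltr0n.
rewrite (ler_pdivrMr _ _ (exprn_gt0 2 (mulr_gt0 eps0 N_gt0))) -(ler_pM2l sixteen).
have -> : 16 * (12 * n%:R ^+ 3) = 192 * n%:R ^+ 3 :> rat by ring.
apply: le_trans (ler_wpM2r n3_ge0 n_ge) _.
have -> : n%:R * (eps ^+ 2 * delta) * n%:R ^+ 3 = (eps ^+ 2 * delta) * n%:R ^+ 4 by ring.
apply: le_trans (ler_wpM2l (ltW c_gt0) n4) _.
by rewrite le_eqVlt; apply/orP; left; apply/eqP; ring.
Qed.

Theorem mainTheorem6
  (A : forall n : nat, {set {set 'I_n}}) (s : nat -> seq nat)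
  (hA : forall n, clustering (A n)) (hs : forall n, size_spec n (s n)) :
  (forall eps : rat, 0 < eps ->
     exists n0 : nat, forall n : nat, (n0 <= n)%N ->
       varN11 (A n) (s n) <= eps * (n%:R) ^+ 4)
  /\
  (forall eps delta : rat, 0 < eps -> 0 < delta ->
     exists n0 : nat, forall n : nat, (n0 <= n)%N ->
       prob (s n) (fun B => eps < `|stat (A n) B|) <= delta).
Proof.
split=> [eps eps0 | eps delta eps0 delta0].
  have [n0 large] := eventually_ge (12 / eps); exists n0 => n /large[n8 n_ge].
  apply: le_trans (varN11_le _ _ n8) _.
  have -> : eps * n%:R ^+ 4 = n%:R * eps * n%:R ^+ 3 by ring.
  have n3_ge0 : 0 <= n%:R ^+ 3 :> rat by rewrite exprn_ge0 ?ler0n.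
  have le12 : 12 <= n%:R * eps by rewrite -(ler_pdivrMr _ _ eps0).
  exact: ler_wpM2r n3_ge0 _ _ le12.
have [n0 large] := eventually_ge (192 / (eps ^+ 2 * delta)); exists n0 => n /large[n8 n_ge].
have n2 : (2 <= n)%N by apply: leq_trans n8.
apply: le_trans (prob_stat_le _ _ n2 eps0) _.
apply: le_trans (chebyshev_rate_le n2 eps0 delta0 n_ge).
have inv_ge0 : 0 <= ((eps * ('C(n, 2))%:R) ^+ 2)^-1 by rewrite invr_ge0 sqr_ge0.
exact: ler_wpM2r inv_ge0 _ _ (varN11_le _ _ n8).
Qed.
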